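(* In the setting described in the context, let $R=I_m-H\bar H$. Then the induced norm $\|R\|=\sqrt{\lambda_{\max}(R^TR)}$ equals $1$.
   Context: Let $V=\{1,\ldots,N\}$, $N\ge 2$, and let $G_I=(V,E_I)$ be a connected undirected graph which is not complete, with adjacency matrix $A$; let $B=A+I_N$. For $i\in V$ let $N_I(i)$ be the set of neighbors of $i$ in $G_I$, $\tilde N_I(i)=N_I(i)\cup\{i\}$, $m_i=\deg_{G_I}(i)+1$, $m=\sum_{i=1}^N m_i$. For $i,j\in V$ set $s_{ij}=\sum_{l=1}^{j}B(i,l)+\sum_{r=1}^{i-1}m_r$ (the last sum is $0$ for $i=1$). Let $e_1,\ldots,e_m$ be the standard basis of $\mathbb{R}^m$ and define $E_j^i=e_{s_{ij}}$ if $j\in\tilde N_I(i)$ and $E_j^i=\mathbf{0}_m$ otherwise. Let $H=\big[\sum_{i=1}^N E_1^i,\ldots,\sum_{i=1}^N E_N^i\big]\in\mathbb{R}^{m\times N}$ and $\bar H=\mathrm{diag}(1/m_1,\ldots,1/m_N)H^T\in\mathbb{R}^{N\times m}$. *)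

From HB Require Import structures.
From mathcomp Require Import all_boot all_order all_algebra.
Set Implicit Arguments. Unset Strict Implicit. Unset Printing Implicit Defensive.
Import Order.TTheory GRing.Theory Num.Theory.
Local Open Scope ring_scope.

(* Vertices V = {1..N} are represented 0-based by 'I_N; the graph G_I by a
   relation e : rel 'I_N (assumed symmetric and irreflexive in the theorem). *)

Definition Bm (N : nat) (e : rel 'I_N) (i l : 'I_N) : nat := (e i l || (i == l)).

Definition inNt (N : nat) (e : rel 'I_N) (i j : 'I_N) : bool := e i j || (j == i).

Definition mdeg (N : nat) (e : rel 'I_N) (i : 'I_N) : nat := (#|[set j | e i j]|).+1.

Definition mtot (N : nat) (e : rel 'I_N) : nat := (\sum_(i < N) mdeg e i)%N.

(* s_ij = sum_{l <= j} B(i,l) + sum_{r < i} m_r  (1-based value; the basis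
   vector e_{s_ij} is the row with 0-based index s_ij - 1) *)
Definition sidx (N : nat) (e : rel 'I_N) (i j : 'I_N) : nat :=
  (\sum_(l < N | (l <= j)%N) Bm e i l + \sum_(r < N | (r < i)%N) mdeg e r)%N.

(* H = [sum_i E^i_1, ..., sum_i E^i_N] *)
Definition Hmx (R : nzRingType) (N : nat) (e : rel 'I_N) : 'M[R]_(mtot e, N) :=
  \matrix_(k, j) \sum_(i < N)
     (if inNt e i j && (nat_of_ord k == (sidx e i j).-1) then 1 else 0).

Definition Hbar (R : fieldType) (N : nat) (e : rel 'I_N) : 'M[R]_(N, mtot e) :=
  diag_mx (\row_i ((mdeg e i)%:R)^-1) *m (Hmx R e)^T.

Definition Rmx (R : fieldType) (N : nat) (e : rel 'I_N) : 'M[R]_(mtot e) :=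
  1%:M - Hmx R e *m Hbar R e.

Definition is_lambda_max (R : realFieldType) (n : nat) (A : 'M[R]_n) (l : R) : Prop :=
  eigenvalue A l /\ forall a, eigenvalue A a -> a <= l :> R.


Definition induced_norm_is (R : rcfType) (n : nat) (M : 'M[R]_n) (r : R) : Prop :=
  exists l, is_lambda_max (M^T *m M) l /\ r = Num.sqrt l.

From HB Require Import structures.
From mathcomp Require Import all_boot all_order all_algebra.
From mathcomp Require Import zify.
Import Order.TTheory GRing.Theory Num.Theory.
Set Implicit Arguments. Unset Strict Implicit. Unset Printing Implicit Defensive.
Local Open Scope ring_scope.

(* The rows of H are indexed by the pairs (i, j) with j in tilde N_I(i), and
   row (i, j) is the unit row e_j; hence H^T H = diag(m_1, ..., m_N), so
   bar H H = I and R = I - H bar H is a symmetric idempotent.  Then R^T R = R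
   has only the eigenvalues 0 and 1, and 1 is attained: for an edge {i, j}
   the rows (i, j) and (j, j) of H coincide, and their difference is a
   nonzero vector killed by H, hence fixed by R. *)

Lemma leq_sum_subset1 (I : finType) (P Q : pred I) (F : I -> nat) x :
  (forall i, P i -> Q i) -> ~~ P x -> Q x ->
  (\sum_(i | P i) F i + F x <= \sum_(i | Q i) F i)%N.
Proof.
move=> sPQ Px Qx; rewrite (bigID P Q) /= leq_add //.
  by rewrite (eq_bigl P) // => i; apply/andP/idP => [[]|Pi] //; split=> //; apply: sPQ.
by rewrite (bigD1 x) ?leq_addr //; apply/andP.
Qed.

Section EigenvaluesOfProjectors.

Variable F : fieldType.

Lemma eigenvalue_idem n (A : 'M[F]_n) a :
  A *m A = A -> eigenvalue A a -> a = 0 \/ a = 1.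
Proof.
move=> AA /eigenvalueP [v vA v_neq0].
have : a *: v = (a * a) *: v by rewrite -vA -{1}AA mulmxA vA -scalemxAl vA scalerA.
move/eqP; rewrite -subr_eq0 -scalerBl scaler_eq0 (negbTE v_neq0) orbF.
by rewrite -{1}[a]mulr1 -mulrBr mulf_eq0 subr_eq0 => /orP[] /eqP; [left | right].
Qed.

Variables (m n : nat) (H : 'M[F]_(m, n)) (K : 'M[F]_(n, m)).

Lemma sub1_mulmx_idem :
  K *m H = 1%:M -> (1%:M - H *m K) *m (1%:M - H *m K) = 1%:M - H *m K.
Proof.
move=> KH; rewrite mulmxBl mul1mx mulmxBr mulmx1.
by rewrite mulmxA -(mulmxA H) KH mulmx1 subrr subr0.
Qed.

Lemma eigenvalue1_sub1_mulmx (v : 'rV[F]_m) :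
  v != 0 -> v *m H = 0 -> eigenvalue (1%:M - H *m K) 1.
Proof.
move=> v_neq0 vH; apply/eigenvalueP; exists v => //.
by rewrite mulmxBr mulmx1 mulmxA vH mul0mx subr0 scale1r.
Qed.

End EigenvaluesOfProjectors.

Lemma trmx_mul_diag_trmx (R : comNzRingType) m n (H : 'M[R]_(m, n)) (d : 'rV_n) :
  (H *m (diag_mx d *m H^T))^T = H *m (diag_mx d *m H^T).
Proof. by rewrite !trmx_mul trmxK tr_diag_mx mulmxA. Qed.

Lemma induced_norm_projector (R : rcfType) n (P : 'M[R]_n) :
  P^T = P -> P *m P = P -> eigenvalue P 1 -> induced_norm_is P 1.
Proof.
move=> Psym Pidem P1; exists 1; rewrite sqrtr1 Psym Pidem; split=> //; split=> // a.
by case/(eigenvalue_idem Pidem) => ->; rewrite ?ler01.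
Qed.

Lemma connect_neq_edge (T : finType) (e : rel T) x y :
  x != y -> connect e x y -> exists z, e x z.
Proof.
move=> xy /connectP [[|z p] /= ]; first by move=> _ xy_eq; rewrite xy_eq eqxx in xy.
by case/andP => exz _ _; exists z.
Qed.

Section RowIndex.

Variables (N : nat) (e : rel 'I_N).
Hypothesis e_irr : irreflexive e.

Definition nbr_rank (i j : 'I_N) : nat := (\sum_(l < N | (l <= j)%N) Bm e i l)%N.
Definition block_start (i : 'I_N) : nat := (\sum_(r < N | (r < i)%N) mdeg e r)%N.

Definition hrow (i j : 'I_N) : nat := (sidx e i j).-1.

Lemma sum_Bm (i : 'I_N) : (\sum_(l < N) Bm e i l)%N = mdeg e i.
Proof.
have -> : mdeg e i = (\sum_(l < N) e i l).+1.
  by rewrite /mdeg -sum1_card big_mkcond; congr _.+1; apply: eq_bigr => l _; rewrite inE.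
rewrite /Bm (bigD1 i) //= [in RHS](bigD1 i) //= e_irr eqxx add0n add1n; congr _.+1.
by apply: eq_bigr => l il; rewrite eq_sym (negbTE il) orbF.
Qed.

Lemma nbr_rank_le (i j : 'I_N) : (nbr_rank i j <= mdeg e i)%N.
Proof.
by rewrite -sum_Bm [X in (_ <= X)%N](bigID (fun l : 'I_N => (l <= j)%N)) leq_addr.
Qed.

Lemma Bm_inNt (i j : 'I_N) : inNt e i j -> Bm e i j = 1%N.
Proof. by rewrite /inNt /Bm eq_sym => ->. Qed.

Lemma nbr_rank_gt0 (i j : 'I_N) : inNt e i j -> (0 < nbr_rank i j)%N.
Proof. by move=> Pij; rewrite /nbr_rank (bigD1 j) //= Bm_inNt. Qed.

Lemma nbr_rank_lt (i j j' : 'I_N) :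
  (j < j')%N -> inNt e i j' -> (nbr_rank i j < nbr_rank i j')%N.
Proof.
move=> jj' Pij'; rewrite -addn1 -(Bm_inNt Pij').
apply: leq_sum_subset1 => [l /= lj||] /=; rewrite -?ltnNge //.
exact: leq_trans lj (ltnW jj').
Qed.

Lemma block_start_lt (i i' : 'I_N) :
  (i < i')%N -> (block_start i + mdeg e i <= block_start i')%N.
Proof.
move=> ii'; apply: leq_sum_subset1 => [r /= ri||] /=; rewrite ?ltnn //.
exact: ltn_trans ri ii'.
Qed.

Lemma block_start_le_mtot (i : 'I_N) : (block_start i + mdeg e i <= mtot e)%N.
Proof. by apply: leq_sum_subset1 => /=; rewrite ?ltnn. Qed.

Lemma hrowE (i j : 'I_N) : hrow i j = (nbr_rank i j + block_start i).-1.
Proof. by []. Qed.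

Lemma hrow_bounds (i j : 'I_N) : inNt e i j ->
  (block_start i <= hrow i j < block_start i + mdeg e i)%N.
Proof.
move=> Pij; have := nbr_rank_gt0 Pij; have := nbr_rank_le i j.
rewrite hrowE; lia.
Qed.

Lemma hrow_lt_mtot (i j : 'I_N) : inNt e i j -> (hrow i j < mtot e)%N.
Proof.
move=> /hrow_bounds/andP[_ lt_hrow]; exact: leq_trans lt_hrow (block_start_le_mtot i).
Qed.

Lemma hrow_inj (i j i' j' : 'I_N) : inNt e i j -> inNt e i' j' ->
  hrow i j = hrow i' j' -> i = i' /\ j = j'.
Proof.
move=> Pij Pij' h_eq.
have /andP[lo hi] := hrow_bounds Pij; have /andP[lo' hi'] := hrow_bounds Pij'.
have ii' : i = i'.
  by case: (ltngtP i i') => [lt|lt|/val_inj //]; have := block_start_lt lt; lia.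
subst i'; split=> //.
move: h_eq; rewrite !hrowE.
have := nbr_rank_gt0 Pij; have := nbr_rank_gt0 Pij'.
case: (ltngtP j j') => [lt|lt|/val_inj //];
  [have := nbr_rank_lt lt Pij' | have := nbr_rank_lt lt Pij]; lia.
Qed.

End RowIndex.

Section SelectionMatrix.

Variables (R : numFieldType) (N : nat) (e : rel 'I_N).
Hypotheses (e_sym : symmetric e) (e_irr : irreflexive e).

Lemma Hmx_hrow (i j j' : 'I_N) (k : 'I_(mtot e)) :
  inNt e i j -> val k = hrow e i j -> Hmx R e k j' = (j == j')%:R.
Proof.
move=> Pij kE.
have owner i' : (inNt e i' j' && (val k == hrow e i' j')) = (i' == i) && (j' == j).
  apply/andP/andP => [[Pij' /eqP kE']|[/eqP-> /eqP->]]; last by rewrite Pij kE.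
  by have [-> ->] := hrow_inj e_irr Pij Pij' (etrans (esym kE) kE'); rewrite !eqxx.
rewrite mxE (bigD1 i) //= owner eqxx big1 => [|i' /negbTE i'i]; last by rewrite owner i'i.
by rewrite addr0 eq_sym; case: eqP.
Qed.

Lemma sum_inNt (j : 'I_N) : (\sum_(i < N) inNt e i j)%N = mdeg e j.
Proof. by rewrite -(sum_Bm e_irr j); apply: eq_bigr => i _; rewrite /inNt /Bm e_sym. Qed.

Lemma trmx_Hmx_mul : (Hmx R e)^T *m Hmx R e = diag_mx (\row_j (mdeg e j)%:R).
Proof.
apply/matrixP => j j'; rewrite mxE [in RHS]mxE [in RHS]mxE.
transitivity (\sum_(i < N) (inNt e i j)%:R * (j == j')%:R : R); last first.
  by rewrite -mulr_suml -natr_sum sum_inNt mulr_natr.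
rewrite (eq_bigr (fun k => \sum_(i < N)
    (if inNt e i j && (val k == hrow e i j) then 1 else 0) * Hmx R e k j')); last first.
  by move=> k _; rewrite mxE [Hmx R e k j]mxE -mulr_suml.
rewrite exchange_big; apply: eq_bigr => i _.
have [Pij|nPij] := boolP (inNt e i j); last first.
  by rewrite mul0r big1 // => k _; rewrite mul0r.
rewrite (bigD1 (Ordinal (hrow_lt_mtot e_irr Pij))) //= eqxx !mul1r.
rewrite (Hmx_hrow _ Pij) // big1 ?addr0 // => k k_neq.
rewrite ifN ?mul0r //; apply: contra k_neq => /eqP kE; exact/eqP/val_inj.
Qed.

Lemma Hbar_mul_Hmx : Hbar R e *m Hmx R e = 1%:M.
Proof.
rewrite /Hbar -mulmxA trmx_Hmx_mul; apply/matrixP => i j.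
rewrite mul_diag_mx !mxE; case: eqP => [->|_]; last by rewrite !mulr0n mulr0.
by rewrite !mulr1n mulVf // pnatr_eq0.
Qed.

Lemma Rmx_sym : (Rmx R e)^T = Rmx R e.
Proof. by rewrite /Rmx /Hbar linearB /= trmx1 trmx_mul_diag_trmx. Qed.

Lemma Rmx_idem : Rmx R e *m Rmx R e = Rmx R e.
Proof. exact: sub1_mulmx_idem Hbar_mul_Hmx. Qed.

Lemma eigenvalue1_Rmx (i j : 'I_N) : e i j -> eigenvalue (Rmx R e) 1.
Proof.
move=> eij.
have Pij : inNt e i j by rewrite /inNt eij.
have Pjj : inNt e j j by rewrite /inNt eqxx orbT.
set k1 := Ordinal (hrow_lt_mtot e_irr Pij); set k2 := Ordinal (hrow_lt_mtot e_irr Pjj).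
have k12 : k1 != k2.
  by apply/eqP => /(congr1 val)/(hrow_inj e_irr Pij Pjj) [ij _]; rewrite ij e_irr in eij.
apply: (@eigenvalue1_sub1_mulmx _ _ _ _ _ (delta_mx 0 k1 - delta_mx 0 k2)).
  rewrite subr_eq0; apply/eqP => /matrixP/(_ 0 k1).
  by rewrite !mxE !eqxx (negbTE k12) /= => /eqP; rewrite oner_eq0.
rewrite mulmxBl -!rowE; apply/eqP; rewrite subr_eq0; apply/eqP/matrixP => x y.
by rewrite [LHS]mxE [RHS]mxE (Hmx_hrow _ Pij) // (Hmx_hrow _ Pjj).
Qed.

End SelectionMatrix.

Theorem lemma5 (R : rcfType) (N : nat) (e : rel 'I_N)
  (HN : (2 <= N)%N)
  (Hsym : symmetric e) (Hirr : irreflexive e)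
  (Hconn : forall i j : 'I_N, connect e i j)
  (Hnc : exists i j : 'I_N, i != j /\ ~~ e i j) :
  induced_norm_is (Rmx R e) 1.
Proof.
have [i [j [ij _]]] := Hnc.
have [k eik] := connect_neq_edge ij (Hconn i j).
apply: induced_norm_projector.
- exact: Rmx_sym.
- exact: Rmx_idem Hsym Hirr.
- exact: eigenvalue1_Rmx Hirr _ _ eik.
Qed.
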